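(* Let $\mu,\nu\in\mathbb{C}$. (1) $\mathcal{D}_{\mu,\nu}=\mathcal{D}_{\nu,\mu}$. (2) For every $\lambda\in\mathbb{C}$, the differential equation $\mathcal{D}_{\mu,\nu}u=\lambda u$ has a regular singularity at $x=0$, with characteristic exponents $0,-\mu,-\nu,-\mu-\nu$. (3) If $\mu,\nu$ are real with $\mu,\nu\geq -1$, then $\mathcal{D}_{\mu,\nu}$ (on $C_c^\infty(\mathbb{R}_+)$) is a symmetric operator on $L^2(\mathbb{R}_+,x^{\mu+\nu+1}\,dx)$. (5) $\mathcal{D}_{\mu,\pm1}=\mathcal{S}_{\mu,\pm1}^2-C_{\mu,\pm1}$, where $\mathcal{S}_{\mu,-1}=\frac1x\big(\theta(\theta+\mu)-x^2\big)$, $C_{\mu,-1}=\frac{(\mu+1)^2}{2}$, and $\mathcal{S}_{\mu,+1}=\frac1x\big(\theta(\theta+\mu+2)+\mu+1-x^2\big)$, $C_{\mu,+1}=\frac{(\mu+1)^2}{2}+2$.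
   Context: Let $\theta=x\frac{d}{dx}$ be the Euler operator on functions on $\mathbb{R}_+=(0,\infty)$; products of operators denote composition, and $\frac1x$, $x^2$ denote multiplication operators. For $\mu,\nu\in\mathbb{C}$ define the fourth order differential operator $$\mathcal{D}_{\mu,\nu}=\frac{1}{x^2}\big((\theta+\nu)(\theta+\mu+\nu)-x^2\big)\big(\theta(\theta+\mu)-x^2\big)-\frac{(\mu-\nu)(\mu+\nu+2)}{2}.$$ *)

From Stdlib Require Import Reals List ClassicalEpsilon.
Open Scope R_scope.

Record Cplx := mkC { re : R; im : R }.

Definition RtoC (x : R) : Cplx := mkC x 0.
Definition C0 : Cplx := RtoC 0.
Definition C1 : Cplx := RtoC 1.
Definition Cadd (z w : Cplx) : Cplx := mkC (re z + re w) (im z + im w).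
Definition Copp (z : Cplx) : Cplx := mkC (- re z) (- im z).
Definition Csub (z w : Cplx) : Cplx := Cadd z (Copp w).
Definition Cmul (z w : Cplx) : Cplx :=
  mkC (re z * re w - im z * im w) (re z * im w + im z * re w).
Definition Cconj (z : Cplx) : Cplx := mkC (re z) (- im z).
Fixpoint Cpow (z : Cplx) (n : nat) : Cplx :=
  match n with O => C1 | S k => Cmul z (Cpow z k) end.

Declare Scope C_scope.
Delimit Scope C_scope with Cplx.
Infix "+" := Cadd : C_scope.
Infix "-" := Csub : C_scope.
Infix "*" := Cmul : C_scope.
Notation "- z" := (Copp z) : C_scope.
Infix "^" := Cpow : C_scope.

Definition Csum (n : nat) (f : nat -> Cplx) : Cplx :=
  fold_right Cadd C0 (map f (seq 0 n)).
Definition Cprod_list (l : list Cplx) : Cplx := fold_right Cmul C1 l.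

(* the derivative of g at x if it exists (junk value otherwise) *)
Definition Rderiv (g : R -> R) (x : R) : R :=
  epsilon (inhabits 0) (fun l => derivable_pt_lim g x l).
Definition deriv (u : R -> Cplx) (x : R) : Cplx :=
  mkC (Rderiv (fun t => re (u t)) x) (Rderiv (fun t => im (u t)) x).

(* u is Cplx^infinity on R_+ = (0,oo) (values at x <= 0 are irrelevant) *)
Definition smooth_pos (u : R -> Cplx) : Prop :=
  exists F : nat -> R -> Cplx,
    (forall x, 0 < x -> F O x = u x) /\
    (forall n x, 0 < x ->
       derivable_pt_lim (fun t => re (F n t)) x (re (F (S n) x)) /\
       derivable_pt_lim (fun t => im (F n t)) x (im (F (S n) x))).

Definition Ccinf_pos (u : R -> Cplx) : Prop :=
  smooth_pos u /\
  exists a b, 0 < a /\ a < b /\ forall x, 0 < x -> (x < a \/ b < x) -> u x = C0.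

Definition Op := (R -> Cplx) -> (R -> Cplx).

Definition theta : Op := fun u x => (RtoC x * deriv u x)%Cplx.
Definition thp (a : Cplx) : Op := fun u x => (theta u x + a * u x)%Cplx.
Definition x2 (x : R) : Cplx := RtoC (x * x).

(* D_{mu,nu} = x^{-2} ((theta+nu)(theta+mu+nu) - x^2)(theta(theta+mu) - x^2)
               - (mu-nu)(mu+nu+2)/2 *)
Definition Bop (mu : Cplx) : Op :=
  fun u x => (theta (thp mu u) x - x2 x * u x)%Cplx.
Definition Aop (mu nu : Cplx) : Op :=
  fun w x => (thp nu (thp (mu + nu)%Cplx w) x - x2 x * w x)%Cplx.
Definition Dop (mu nu : Cplx) : Op :=
  fun u x => (RtoC (/ (x * x)) * Aop mu nu (Bop mu u) x
              - (mu - nu) * (mu + nu + RtoC 2) * RtoC (/ 2) * u x)%Cplx.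

Definition Sm1 (mu : Cplx) : Op :=
  fun u x => (RtoC (/ x) * (theta (thp mu u) x - x2 x * u x))%Cplx.
Definition Cm1 (mu : Cplx) : Cplx := ((mu + C1) * (mu + C1) * RtoC (/ 2))%Cplx.
Definition Sp1 (mu : Cplx) : Op :=
  fun u x => (RtoC (/ x) * (theta (thp (mu + RtoC 2) u) x
                             + (mu + C1) * u x - x2 x * u x))%Cplx.
Definition Cp1 (mu : Cplx) : Cplx := ((mu + C1) * (mu + C1) * RtoC (/ 2) + RtoC 2)%Cplx.

Definition Cseries_cv (c : nat -> Cplx) (x : R) (l : Cplx) : Prop :=
  Un_cv (fun N => re (Csum (S N) (fun k => c k * Cpow (RtoC x) k)%Cplx)) (re l) /\
  Un_cv (fun N => im (Csum (S N) (fun k => c k * Cpow (RtoC x) k)%Cplx)) (im l).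

Definition analytic_at0 (f : R -> Cplx) (r : R) : Prop :=
  exists c : nat -> Cplx, forall x, Rabs x < r -> Cseries_cv c x (f x).

(* The linear ODE  L u = 0  has a regular singularity (in Fuchs' sense) at x = 0
   with characteristic exponents rho (listed with multiplicity):
   near 0 it is equivalent (via a nonvanishing factor g) to
       theta^n u + b_{n-1}(x) theta^{n-1} u + ... + b_0(x) u = 0
   with b_j analytic at 0, and the indicial polynomial
       s^n + b_{n-1}(0) s^{n-1} + ... + b_0(0)
   equals prod_{rho_i in rho} (s - rho_i). *)
Definition reg_sing_at0 (L : Op) (rho : list Cplx) : Prop :=
  exists (n : nat) (b : nat -> R -> Cplx) (g : R -> Cplx) (r : R),
    0 < r /\ length rho = n /\
    (forall j, (j < n)%nat -> analytic_at0 (b j) r) /\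
    (forall x, 0 < x < r -> g x <> C0) /\
    (forall u, smooth_pos u -> forall x, 0 < x < r ->
       L u x = (g x * (Nat.iter n theta u x
                       + Csum n (fun j => b j x * Nat.iter j theta u x)))%Cplx) /\
    (forall s : Cplx,
       (Cpow s n + Csum n (fun j => b j 0 * Cpow s j))%Cplx
       = Cprod_list (map (fun rh => (s - rh)%Cplx) rho)).

Definition shift_op (L : Op) (lam : Cplx) : Op := fun u x => (L u x - lam * u x)%Cplx.

Definition RInt_is (f : R -> R) (a b I : R) : Prop :=
  exists pr : Riemann_integrable f a b, RiemannInt pr = I.
Definition CInt_is (f : R -> Cplx) (a b : R) (I : Cplx) : Prop :=
  RInt_is (fun x => re (f x)) a b (re I) /\ RInt_is (fun x => im (f x)) a b (im I).

(* <f, g> in L^2(R_+, x^{mu+nu+1} dx) for f, g vanishing on R_+ outside [a,b]: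
   the integrand of the inner product *)
Definition L2_integrand (w : R) (f g : R -> Cplx) : R -> Cplx :=
  fun x => (f x * Cconj (g x) * RtoC (Rpower x w))%Cplx.

(* Since theta x^2 = x^2 (theta + 2), expanding the product gives the
   normal form
       D = x^-2 Pi(theta) - 2 theta (theta + mu + nu + 2) + x^2 - kappa,
       Pi(s) = s (s + mu) (s + nu) (s + mu + nu),
       kappa = (mu + nu + 2)(mu + nu + 4) / 2,
   stated as [Dop_theta_form] (powers of theta) and [Dop_factored] (products
   of Euler factors theta + a).  Then
   (1) the normal form is symmetric in mu and nu;
   (2) x^2 (D - lambda) = Pi(theta) + (polynomial in x) * (lower powers of
       theta) is of Fuchs type at 0 with indicial polynomial Pi, whose roots
       are 0, -mu, -nu, -mu-nu;
   (3) in L^2(R_+, x^w dx), w = mu + nu + 1, the formal adjoint of theta + a is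
       -(theta + w + 1 - a) (Lagrange's identity [green_formula]); so both
       theta (theta + mu + nu + 2) and x^-2 Pi(theta) are formally
       self-adjoint, and <D u, v> - <u, D v> integrates the derivative of a
       boundary form that vanishes outside the support of u;
   (5) the factorisations are direct computations. *)

From Pilot Require Import Defs.
From Stdlib Require Import Reals List Lra Lia ClassicalEpsilon.
Import ListNotations.
Open Scope R_scope.

Lemma Ceq (z w : Cplx) : re z = re w -> im z = im w -> z = w.
Proof. destruct z, w; simpl; intros; subst; reflexivity. Qed.

Definition agree (f E : R -> Cplx) : Prop := forall t, 0 < t -> f t = E t.

Definition hasD (E D : R -> Cplx) : Prop := forall t, 0 < t ->
  derivable_pt_lim (fun s => re (E s)) t (re (D t)) /\
  derivable_pt_lim (fun s => im (E s)) t (im (D t)).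

Definition jets (F : nat -> R -> Cplx) : Prop := forall n, hasD (F n) (F (S n)).

Lemma smooth_jets u : smooth_pos u -> exists F, jets F /\ agree u (F O).
Proof.
  intros [F [H0 HJ]]. exists F; split.
  - intros n t Ht; exact (HJ n t Ht).
  - intros t Ht; symmetry; auto.
Qed.

Lemma derivable_pt_lim_pos (g h : R -> R) t l : 0 < t ->
  (forall s, 0 < s -> g s = h s) -> derivable_pt_lim g t l -> derivable_pt_lim h t l.
Proof.
  intros Ht E H. apply (derivable_pt_lim_locally_ext g h t 0 (t + 1)); auto; try lra.
  intros z Hz; apply E; lra.
Qed.

Lemma hasD_agree f E D : agree f E -> hasD E D -> hasD f D.
Proof.
  intros A H t Ht. destruct (H t Ht) as [H1 H2]. split.
  - apply (derivable_pt_lim_pos (fun s => re (E s))); auto. intros; rewrite A; auto.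
  - apply (derivable_pt_lim_pos (fun s => im (E s))); auto. intros; rewrite A; auto.
Qed.

Lemma hasD_ext E D D' : hasD E D -> agree D D' -> hasD E D'.
Proof. intros H E1 t Ht; rewrite <- E1; auto. Qed.

(* The choice-based derivative [deriv] of Defs equals any derivative that
   exists; this is how the operators theta, S, D get evaluated. *)
Lemma deriv_eq f t l :
  derivable_pt_lim (fun s => re (f s)) t (re l) ->
  derivable_pt_lim (fun s => im (f s)) t (im l) -> deriv f t = l.
Proof.
  intros K1 K2. unfold deriv, Rderiv. apply Ceq; simpl.
  - apply (uniqueness_limite (fun s => re (f s)) t); auto.
    apply (epsilon_spec (inhabits 0) (fun l => derivable_pt_lim (fun t => re (f t)) t l)).
    exists (re l); exact K1.
  - apply (uniqueness_limite (fun s => im (f s)) t); auto.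
    apply (epsilon_spec (inhabits 0) (fun l => derivable_pt_lim (fun t => im (f t)) t l)).
    exists (im l); exact K2.
Qed.

Lemma agree_deriv f E E' : agree f E -> hasD E E' -> agree (deriv f) E'.
Proof.
  intros HA HD t Ht. destruct (hasD_agree f E E' HA HD t Ht) as [K1 K2].
  exact (deriv_eq f t _ K1 K2).
Qed.

Lemma agree_deriv_self P P' : hasD P P' -> agree (deriv P) P'.
Proof. intros H. apply (agree_deriv P P); auto. intros t _; reflexivity. Qed.

Lemma hasD_real (c c' : R -> R) : (forall t, 0 < t -> derivable_pt_lim c t (c' t)) ->
  hasD (fun t => RtoC (c t)) (fun t => RtoC (c' t)).
Proof. intros H t Ht; split; simpl; auto. apply derivable_pt_lim_const. Qed.

Lemma hasD_const a : hasD (fun _ => a) (fun _ => C0).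
Proof. intros t Ht; split; simpl; apply derivable_pt_lim_const. Qed.

Lemma hasD_id : hasD (fun t => RtoC t) (fun _ => RtoC 1).
Proof. apply (hasD_real (fun t => t)). intros; apply derivable_pt_lim_id. Qed.

Lemma hasD_add E1 E2 D1 D2 : hasD E1 D1 -> hasD E2 D2 ->
  hasD (fun t => E1 t + E2 t)%Cplx (fun t => D1 t + D2 t)%Cplx.
Proof.
  intros A B t Ht; destruct (A t Ht), (B t Ht); simpl; split.
  - apply (derivable_pt_lim_plus (fun s => re (E1 s)) (fun s => re (E2 s))); auto.
  - apply (derivable_pt_lim_plus (fun s => im (E1 s)) (fun s => im (E2 s))); auto.
Qed.

Lemma hasD_opp E1 D1 : hasD E1 D1 -> hasD (fun t => - E1 t)%Cplx (fun t => - D1 t)%Cplx.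
Proof.
  intros A t Ht; destruct (A t Ht); simpl; split.
  - apply (derivable_pt_lim_opp (fun s => re (E1 s))); auto.
  - apply (derivable_pt_lim_opp (fun s => im (E1 s))); auto.
Qed.

Lemma hasD_sub E1 E2 D1 D2 : hasD E1 D1 -> hasD E2 D2 ->
  hasD (fun t => E1 t - E2 t)%Cplx (fun t => D1 t - D2 t)%Cplx.
Proof. intros A B. apply (hasD_add E1 (fun t => - E2 t)%Cplx); auto using hasD_opp. Qed.

Lemma hasD_conj E1 D1 : hasD E1 D1 -> hasD (fun t => Cconj (E1 t)) (fun t => Cconj (D1 t)).
Proof.
  intros A t Ht; destruct (A t Ht); simpl; split; auto.
  apply (derivable_pt_lim_opp (fun s => im (E1 s))); auto.
Qed.

Lemma hasD_mul E1 E2 D1 D2 : hasD E1 D1 -> hasD E2 D2 ->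
  hasD (fun t => E1 t * E2 t)%Cplx (fun t => D1 t * E2 t + E1 t * D2 t)%Cplx.
Proof.
  intros A B t Ht; destruct (A t Ht) as [a1 a2], (B t Ht) as [b1 b2]; simpl; split.
  - assert (H := derivable_pt_lim_minus _ _ _ _ _
      (derivable_pt_lim_mult (fun s => re (E1 s)) (fun s => re (E2 s)) _ _ _ a1 b1)
      (derivable_pt_lim_mult (fun s => im (E1 s)) (fun s => im (E2 s)) _ _ _ a2 b2)).
    unfold minus_fct, mult_fct in H.
    replace (re (D1 t) * re (E2 t) - im (D1 t) * im (E2 t)
             + (re (E1 t) * re (D2 t) - im (E1 t) * im (D2 t)))
      with (re (D1 t) * re (E2 t) + re (E1 t) * re (D2 t)
            - (im (D1 t) * im (E2 t) + im (E1 t) * im (D2 t))) by ring.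
    exact H.
  - assert (H := derivable_pt_lim_plus _ _ _ _ _
      (derivable_pt_lim_mult (fun s => re (E1 s)) (fun s => im (E2 s)) _ _ _ a1 b2)
      (derivable_pt_lim_mult (fun s => im (E1 s)) (fun s => re (E2 s)) _ _ _ a2 b1)).
    unfold plus_fct, mult_fct in H.
    replace (re (D1 t) * im (E2 t) + im (D1 t) * re (E2 t)
             + (re (E1 t) * im (D2 t) + im (E1 t) * re (D2 t)))
      with (re (D1 t) * im (E2 t) + re (E1 t) * im (D2 t)
            + (im (D1 t) * re (E2 t) + im (E1 t) * re (D2 t))) by ring.
    exact H.
Qed.

Lemma hasD_inv : hasD (fun t => RtoC (/ t)) (fun t => - (RtoC (/ t) * RtoC (/ t)))%Cplx.
Proof.
  eapply hasD_ext.
  - apply (hasD_real (fun t => / t) (fun t => - / (t * t))). intros t Ht.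
    replace (- / (t * t)) with ((0 * id t - 1 * 1) / Rsqr (id t)) by (unfold id, Rsqr; field; lra).
    apply (derivable_pt_lim_ext (div_fct (fun _ => 1) id)).
    { intro s; unfold div_fct, id, Rdiv; ring. }
    apply derivable_pt_lim_div; [apply derivable_pt_lim_const | apply derivable_pt_lim_id |].
    unfold id; lra.
  - intros t Ht; apply Ceq; simpl; field; lra.
Qed.

Lemma hasD_x2 : hasD x2 (fun t => RtoC 2 * RtoC t)%Cplx.
Proof.
  eapply hasD_ext.
  - apply (hasD_real (fun t => t * t) (fun t => 1 * t + t * 1)). intros t _.
    exact (derivable_pt_lim_mult id id t 1 1 (derivable_pt_lim_id t) (derivable_pt_lim_id t)).
  - intros t _; apply Ceq; simpl; ring.
Qed.

Lemma hasD_rpow w : hasD (fun t => RtoC (Rpower t w))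
   (fun t => RtoC w * (RtoC (/ t) * RtoC (Rpower t w)))%Cplx.
Proof.
  eapply hasD_ext.
  - apply (hasD_real (fun t => Rpower t w) (fun t => w * Rpower t (w - 1))). intros t Ht.
    apply derivable_pt_lim_power; auto.
  - intros t Ht; apply Ceq; simpl; try ring.
    replace (w - 1) with (w + - (1)) by ring.
    rewrite Rpower_plus, Rpower_Ropp, Rpower_1; auto. ring.
Qed.

Lemma hasD_inv2 : hasD (fun t => RtoC (/ (t * t)))
   (fun t => - (RtoC 2 * (RtoC (/ t) * RtoC (/ (t * t)))))%Cplx.
Proof.
  eapply hasD_ext.
  - apply (hasD_agree _ (fun t => RtoC (/ t) * RtoC (/ t))%Cplx).
    { intros t Ht; apply Ceq; simpl; field; lra. }
    apply hasD_mul; apply hasD_inv.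
  - intros t Ht; apply Ceq; simpl; field; lra.
Qed.

Lemma jets_hasD F n : jets F -> hasD (F n) (F (S n)).
Proof. intros J; exact (J n). Qed.

Lemma agree_add f g E1 E2 : agree f E1 -> agree g E2 ->
  agree (fun t => f t + g t)%Cplx (fun t => E1 t + E2 t)%Cplx.
Proof. intros A B t Ht; rewrite A, B; auto. Qed.
Lemma agree_sub f g E1 E2 : agree f E1 -> agree g E2 ->
  agree (fun t => f t - g t)%Cplx (fun t => E1 t - E2 t)%Cplx.
Proof. intros A B t Ht; rewrite A, B; auto. Qed.
Lemma agree_mul f g E1 E2 : agree f E1 -> agree g E2 ->
  agree (fun t => f t * g t)%Cplx (fun t => E1 t * E2 t)%Cplx.
Proof. intros A B t Ht; rewrite A, B; auto. Qed.
Lemma agree_opp f E1 : agree f E1 -> agree (fun t => - f t)%Cplx (fun t => - E1 t)%Cplx.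
Proof. intros A t Ht; rewrite A; auto. Qed.
Lemma agree_refl f : agree f f.
Proof. intros t _; reflexivity. Qed.

(* For an expression built from +, -, *, 1/t,
   t^2 and the jets [F n] of a smooth function, [differentiate] proves
   [hasD E D] with an explicit D; [expand] rewrites an operator expression
   (theta, theta + a, multiplication operators) applied to u into an explicit
   expression in t and the values [F n t]. *)
Ltac differentiate :=
  lazymatch goal with
  | |- hasD (fun t => Cadd (@?a t) (@?b t)) _ => eapply (hasD_add a b); [differentiate|differentiate]
  | |- hasD (fun t => Csub (@?a t) (@?b t)) _ => eapply (hasD_sub a b); [differentiate|differentiate]
  | |- hasD (fun t => Cmul (@?a t) (@?b t)) _ => eapply (hasD_mul a b); [differentiate|differentiate]
  | |- hasD (fun t => Copp (@?a t)) _ => eapply (hasD_opp a); differentiate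
  | |- hasD (fun t => RtoC t) _ => apply hasD_id
  | |- hasD (fun t => RtoC (/ t)) _ => apply hasD_inv
  | |- hasD (fun t => x2 t) _ => apply hasD_x2
  | |- hasD x2 _ => apply hasD_x2
  | |- hasD (fun t => ?F ?n t) _ => apply jets_hasD; assumption
  | |- hasD (?F ?n) _ => apply jets_hasD; assumption
  | |- hasD (fun t => _) _ => apply hasD_const
  end.

Ltac expand :=
  lazymatch goal with
  | |- agree (fun t => Cadd (@?a t) (@?b t)) _ => eapply (agree_add a b); [expand|expand]
  | |- agree (fun t => Csub (@?a t) (@?b t)) _ => eapply (agree_sub a b); [expand|expand]
  | |- agree (fun t => Cmul (@?a t) (@?b t)) _ => eapply (agree_mul a b); [expand|expand]
  | |- agree (fun t => Copp (@?a t)) _ => eapply (agree_opp a); expand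
  | |- agree (fun t => deriv ?f t) _ => eapply (agree_deriv f); [expand|differentiate]
  | |- agree (deriv ?f) _ => eapply (agree_deriv f); [expand|differentiate]
  | |- _ => first [eassumption | apply agree_refl]
  end.

Ltac unfold_ops :=
  cbv beta iota delta [Dop Aop Bop theta thp Sm1 Sp1 Nat.iter nat_rect].

Lemma agree_at f g E1 E2 x : agree f E1 -> agree g E2 -> 0 < x -> E1 x = E2 x -> f x = g x.
Proof. intros A B Hx E; rewrite A, B; auto. Qed.

(* Reduce [L = R] at the point x > 0 to the equality of the expansions of
   both sides, an identity between explicit expressions in x and [F n x]. *)
Ltac by_expansion x :=
  lazymatch goal with |- ?L = ?R =>
    lazymatch eval pattern x in L with ?f _ =>
    lazymatch eval pattern x in R with ?g _ =>
      eapply (agree_at f g); [unfold_ops; expand | unfold_ops; expand | assumption |];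
      cbv beta
    end end end.

(* Coefficients of the indicial polynomial
     s (s + mu) (s + nu) (s + mu + nu) = s^4 + e3 s^3 + e2 s^2 + e1 s. *)
Definition e3 (mu nu : Cplx) : Cplx := (RtoC 2 * (mu + nu))%Cplx.
Definition e2 (mu nu : Cplx) : Cplx := ((mu + nu) * (mu + nu) + mu * nu)%Cplx.
Definition e1 (mu nu : Cplx) : Cplx := (mu * nu * (mu + nu))%Cplx.
(* The constant term kappa = (mu + nu + 2)(mu + nu + 4)/2 of the second order part. *)
Definition kappa (mu nu : Cplx) : Cplx :=
  ((mu + nu + RtoC 2) * (mu + nu + RtoC 4) * RtoC (/ 2))%Cplx.

Lemma Dop_theta_form mu nu u x : smooth_pos u -> 0 < x ->
  Dop mu nu u x =
    (RtoC (/ (x * x)) * (Nat.iter 4 theta u x + e3 mu nu * Nat.iter 3 theta u x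
                         + e2 mu nu * Nat.iter 2 theta u x + e1 mu nu * Nat.iter 1 theta u x)
     - RtoC 2 * (Nat.iter 2 theta u x + (mu + nu + RtoC 2) * Nat.iter 1 theta u x)
     + (x2 x - kappa mu nu) * u x)%Cplx.
Proof.
  intros Hsm Hx. destruct (smooth_jets u Hsm) as [F [HJ Hu]].
  by_expansion x. unfold e1, e2, e3, kappa. apply Ceq; simpl; field; lra.
Qed.

Lemma Dop_symmetric mu nu u : smooth_pos u -> forall x, 0 < x -> Dop mu nu u x = Dop nu mu u x.
Proof.
  intros Hsm x Hx. rewrite !Dop_theta_form by assumption.
  unfold e1, e2, e3, kappa. apply Ceq; simpl; ring.
Qed.

(* Multiplying by x^2, D - lambda = x^-2 (theta^4 + sum_j b_j(x) theta^j)
   with polynomial coefficients b_j, whose values at 0 are the coefficients of the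
   indicial polynomial.  [bcoef j k] is the coefficient of x^k in b_j. *)
Definition bcoef (mu nu lam : Cplx) (j k : nat) : Cplx :=
  match j, k with
  | 3, 0 => e3 mu nu
  | 2, 0 => e2 mu nu
  | 1, 0 => e1 mu nu
  | 2, 2 => RtoC (-2)
  | 1, 2 => (RtoC (-2) * (mu + nu + RtoC 2))%Cplx
  | 0, 2 => (- kappa mu nu - lam)%Cplx
  | 0, 4 => RtoC 1
  | _, _ => C0
  end.
Definition bfun (mu nu lam : Cplx) (j : nat) (x : R) : Cplx :=
  Csum 5 (fun k => bcoef mu nu lam j k * Cpow (RtoC x) k)%Cplx.

Lemma Csum_S n f : Csum (S n) f = (Csum n f + f n)%Cplx.
Proof.
  unfold Csum. rewrite seq_S, map_app, fold_right_app. simpl.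
  generalize (map f (seq 0 n)). induction l as [|a l IH]; simpl.
  - apply Ceq; simpl; ring.
  - rewrite IH. apply Ceq; simpl; ring.
Qed.

Lemma polynomial_series (c : nat -> Cplx) n x : (forall k, (n <= k)%nat -> c k = C0) ->
  Cseries_cv c x (Csum n (fun k => c k * Cpow (RtoC x) k)%Cplx).
Proof.
  intros Hc.
  assert (E : forall m, (n <= m)%nat -> Csum m (fun k => c k * Cpow (RtoC x) k)%Cplx
                                     = Csum n (fun k => c k * Cpow (RtoC x) k)%Cplx).
  { intros m Hm. induction Hm as [|m Hm IH]; [reflexivity|].
    rewrite Csum_S, IH, Hc by exact Hm. apply Ceq; simpl; ring. }
  split; intros eps Heps; exists n; intros N HN; rewrite E by lia;
    unfold R_dist; rewrite Rminus_diag, Rabs_R0; lra.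
Qed.

Lemma Dop_regular_singularity mu nu lam : reg_sing_at0 (shift_op (Dop mu nu) lam)
   (C0 :: (- mu)%Cplx :: (- nu)%Cplx :: (- mu - nu)%Cplx :: nil).
Proof.
  exists 4%nat, (bfun mu nu lam), (fun x => RtoC (/ (x * x))), 1.
  split; [lra|]. split; [reflexivity|]. split; [|split; [|split]].
  - intros j Hj. exists (bcoef mu nu lam j). intros x _. apply polynomial_series.
    intros k Hk. do 5 (destruct k; [lia|]). destruct j as [|[|[|[|j]]]]; reflexivity.
  - intros x [Hx _] H. injection H as H.
    assert (0 < / (x * x)) by (apply Rinv_0_lt_compat, Rmult_lt_0_compat; lra). lra.
  - intros u Hsm x [Hx _]. unfold shift_op. rewrite Dop_theta_form by assumption.
    unfold bfun, bcoef, Csum, seq, map, fold_right, x2.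
    apply Ceq; simpl; field; lra.
  - intros s. unfold bfun, bcoef, e1, e2, e3. apply Ceq; simpl; ring.
Qed.

Lemma Dop_nu_m1 mu u x : smooth_pos u -> 0 < x ->
  Dop mu (RtoC (-1)) u x = (Sm1 mu (Sm1 mu u) x - Cm1 mu * u x)%Cplx.
Proof.
  intros Hsm Hx. destruct (smooth_jets u Hsm) as [F [HJ Hu]].
  by_expansion x. unfold Cm1. apply Ceq; simpl; field; lra.
Qed.

Lemma Dop_nu_p1 mu u x : smooth_pos u -> 0 < x ->
  Dop mu (RtoC 1) u x = (Sp1 mu (Sp1 mu u) x - Cp1 mu * u x)%Cplx.
Proof.
  intros Hsm Hx. destruct (smooth_jets u Hsm) as [F [HJ Hu]].
  by_expansion x. unfold Cp1. apply Ceq; simpl; field; lra.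
Qed.

Fixpoint Ck (k : nat) (P : R -> Cplx) : Prop :=
  match k with O => True | S k => exists P', hasD P P' /\ Ck k P' end.

Lemma Ck_S_le k P : Ck (S k) P -> Ck k P.
Proof.
  revert P; induction k as [|k IH]; intros P H; simpl; auto.
  destruct H as [P' [H1 H2]]. exists P'; split; auto.
Qed.

Lemma Ck_le m k P : (m <= k)%nat -> Ck k P -> Ck m P.
Proof. induction 1; auto using Ck_S_le. Qed.

Lemma Ck_ext k P Q : agree P Q -> Ck k P -> Ck k Q.
Proof.
  destruct k; simpl; auto. intros E [P' [H1 H2]]. exists P'; split; auto.
  apply (hasD_agree Q P); auto. intros t Ht; symmetry; auto.
Qed.

Lemma Ck_const k a : Ck k (fun _ => a).
Proof. revert a; induction k; simpl; auto. intros a. exists (fun _ => C0); split; auto. apply hasD_const. Qed.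

Lemma Ck_add k P Q : Ck k P -> Ck k Q -> Ck k (fun t => P t + Q t)%Cplx.
Proof.
  revert P Q; induction k as [|k IH]; simpl; auto.
  intros P Q [P' [HP SP]] [Q' [HQ SQ]]. exists (fun t => P' t + Q' t)%Cplx.
  split; auto using hasD_add.
Qed.

Lemma Ck_mul k P Q : Ck k P -> Ck k Q -> Ck k (fun t => P t * Q t)%Cplx.
Proof.
  revert P Q; induction k as [|k IH]; simpl; auto.
  intros P Q [P' [HP SP]] [Q' [HQ SQ]]. exists (fun t => P' t * Q t + P t * Q' t)%Cplx.
  split; [apply hasD_mul; auto|].
  apply Ck_add; apply IH; auto; apply Ck_S_le; simpl; eauto.
Qed.

Lemma Ck_sub k P Q : Ck k P -> Ck k Q -> Ck k (fun t => P t - Q t)%Cplx.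
Proof.
  intros HP HQ. apply (Ck_ext k (fun t => P t + RtoC (-1) * Q t)%Cplx).
  - intros t _; apply Ceq; simpl; ring.
  - apply Ck_add; [exact HP | apply Ck_mul; [apply Ck_const | exact HQ]].
Qed.

Lemma Ck_conj k P : Ck k P -> Ck k (fun t => Cconj (P t)).
Proof.
  revert P; induction k as [|k IH]; simpl; auto.
  intros P [P' [HP SP]]. exists (fun t => Cconj (P' t)); split; auto using hasD_conj.
Qed.

Lemma Ck_id k : Ck k (fun t => RtoC t).
Proof. destruct k; simpl; auto. exists (fun _ => RtoC 1); split; [apply hasD_id | apply Ck_const]. Qed.

Lemma Ck_inv k : Ck k (fun t => RtoC (/ t)).
Proof.
  induction k as [|k IH]; simpl; auto.
  exists (fun t => - (RtoC (/ t) * RtoC (/ t)))%Cplx; split; [apply hasD_inv|].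
  apply (Ck_ext k (fun t => RtoC (-1) * (RtoC (/ t) * RtoC (/ t)))%Cplx).
  - intros t _; apply Ceq; simpl; ring.
  - apply Ck_mul; [apply Ck_const | apply Ck_mul; exact IH].
Qed.

Lemma Ck_inv2 k : Ck k (fun t => RtoC (/ (t * t))).
Proof.
  apply (Ck_ext k (fun t => RtoC (/ t) * RtoC (/ t))%Cplx).
  - intros t Ht; apply Ceq; simpl; field; lra.
  - apply Ck_mul; apply Ck_inv.
Qed.

Lemma Ck_x2 k : Ck k x2.
Proof.
  apply (Ck_ext k (fun t => RtoC t * RtoC t)%Cplx).
  - intros t _; apply Ceq; unfold x2; simpl; ring.
  - apply Ck_mul; apply Ck_id.
Qed.

Lemma Ck_rpow k : forall w, Ck k (fun t => RtoC (Rpower t w)).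
Proof.
  induction k as [|k IH]; simpl; auto. intros w.
  exists (fun t => RtoC w * (RtoC (/ t) * RtoC (Rpower t w)))%Cplx.
  split; [apply hasD_rpow | apply Ck_mul; [apply Ck_const | apply Ck_mul; [apply Ck_inv | apply IH]]].
Qed.

Lemma Ck_smooth k u : smooth_pos u -> Ck k u.
Proof.
  intros Hsm. destruct (smooth_jets u Hsm) as [F [HJ Hu]].
  apply (Ck_ext k (F O)); [intros t Ht; symmetry; auto|].
  generalize O. induction k as [|k IH]; simpl; auto. intros n. exists (F (S n)); auto.
Qed.

Lemma Ck_thp k a P : Ck (S k) P -> Ck k (thp a P).
Proof.
  intros [P' [HP SP]]. unfold thp, theta.
  apply (Ck_ext k (fun t => RtoC t * P' t + a * P t)%Cplx).
  - intros t Ht. rewrite (agree_deriv_self P P' HP t Ht); reflexivity.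
  - apply Ck_add; apply Ck_mul; auto using Ck_id, Ck_const.
    apply Ck_S_le; simpl; eauto.
Qed.

Fixpoint chain (l : list R) (P : R -> Cplx) : R -> Cplx :=
  match l with nil => P | a :: l => thp (RtoC a) (chain l P) end.

Lemma chain_app l1 l2 P : chain (l1 ++ l2) P = chain l1 (chain l2 P).
Proof. induction l1 as [|a l1 IH]; simpl; [reflexivity | rewrite IH; reflexivity]. Qed.

Lemma Ck_chain l k P : Ck (length l + k) P -> Ck k (chain l P).
Proof.
  revert k; induction l as [|a l IH]; simpl; auto. intros k H.
  apply Ck_thp, IH. rewrite <- plus_n_Sm. exact H.
Qed.

(* Integration by parts in L^2(R_+, x^w dx): the formal adjoint of theta + a
   (a real) is -(theta + w + 1 - a). *)
Section Green.
Variable w : R.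

Definition boundary_pair (P Q : R -> Cplx) (t : R) : Cplx :=
  (RtoC t * RtoC (Rpower t w) * (P t * Cconj (Q t)))%Cplx.

Lemma hasD_boundary_pair a P Q : Ck 1 P -> Ck 1 Q ->
  hasD (boundary_pair P Q) (fun t => L2_integrand w (thp (RtoC a) P) Q t
                                     + L2_integrand w P (thp (RtoC (w + 1 - a)) Q) t)%Cplx.
Proof.
  intros [P' [HP _]] [Q' [HQ _]]. eapply hasD_ext.
  - unfold boundary_pair.
    apply hasD_mul; [apply hasD_mul; [apply hasD_id | apply hasD_rpow] |].
    apply hasD_mul; [exact HP | apply hasD_conj; exact HQ].
  - intros t Ht. unfold L2_integrand, thp, theta.
    rewrite (agree_deriv_self P P' HP t Ht), (agree_deriv_self Q Q' HQ t Ht).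
    apply Ceq; simpl; field; lra.
Qed.

(* The factors of the adjoint of (theta + a_1) ... (theta + a_n), up to (-1)^n. *)
Definition adjoint_factors (l : list R) : list R := rev (map (fun a => w + 1 - a) l).

Fixpoint concomitant (l : list R) (P Q : R -> Cplx) : R -> Cplx :=
  match l with
  | nil => fun _ => C0
  | a :: l => fun t =>
      (boundary_pair (chain l P) Q t - concomitant l P (thp (RtoC (w + 1 - a)) Q) t)%Cplx
  end.

Lemma green_formula l : forall P Q, Ck (S (length l)) P -> Ck (S (length l)) Q ->
  hasD (concomitant l P Q)
    (fun t => L2_integrand w (chain l P) Q t
              - RtoC ((-1) ^ length l) * L2_integrand w P (chain (adjoint_factors l) Q) t)%Cplx.
Proof.
  induction l as [|a l IH]; intros P Q HP HQ; cbn [length] in HP, HQ |- *.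
  - eapply hasD_ext; [apply hasD_const|].
    intros t _; unfold L2_integrand; apply Ceq; simpl; ring.
  - unfold adjoint_factors in *. simpl. rewrite chain_app. simpl.
    eapply hasD_ext.
    + apply hasD_sub; [apply (hasD_boundary_pair a) | apply IH].
      * apply Ck_chain. rewrite Nat.add_1_r. exact (Ck_S_le _ _ HP).
      * apply (Ck_le 1 (S (S (length l)))); [lia | exact HQ].
      * exact (Ck_S_le _ _ HP).
      * exact (Ck_thp _ _ _ HQ).
    + intros t _. unfold L2_integrand. apply Ceq; simpl; ring.
Qed.
End Green.

Definition vanishes_on (p q : R) (f : R -> Cplx) : Prop := forall t, p < t < q -> f t = C0.

Lemma deriv_vanishes p q f : vanishes_on p q f -> vanishes_on p q (deriv f).
Proof.
  intros H t Ht.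
  assert (Z : forall g : R -> R, (forall s, p < s < q -> g s = 0) -> derivable_pt_lim g t 0).
  { intros g Hg. apply (derivable_pt_lim_locally_ext (fun _ => 0) g t p q); auto.
    - intros; symmetry; auto.
    - apply derivable_pt_lim_const. }
  apply deriv_eq; simpl.
  - apply Z; intros s Hs; rewrite (H s Hs); reflexivity.
  - apply Z; intros s Hs; rewrite (H s Hs); reflexivity.
Qed.

Lemma chain_vanishes p q l P : vanishes_on p q P -> vanishes_on p q (chain l P).
Proof.
  intros H. induction l as [|a l IH]; simpl; auto.
  intros t Ht. unfold thp, theta. rewrite IH, (deriv_vanishes p q _ IH) by exact Ht.
  apply Ceq; simpl; ring.
Qed.

Lemma concomitant_vanishes w p q l : forall P Q, vanishes_on p q P ->
  vanishes_on p q (concomitant w l P Q).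
Proof.
  induction l as [|a l IH]; intros P Q H t Ht; simpl; auto.
  unfold boundary_pair. rewrite (chain_vanishes p q l P H t Ht), (IH P _ H t Ht).
  apply Ceq; simpl; ring.
Qed.

Lemma continuous_zero_at_endpoint (g : R -> R) p q c : continuity_pt g c -> p < q ->
  (c = p \/ c = q) -> (forall t, p < t < q -> g t = 0) -> g c = 0.
Proof.
  intros Hc Hpq Hend H0. destruct (Req_dec (g c) 0) as [|Hne]; auto. exfalso.
  destruct (Hc (Rabs (g c)) (Rabs_pos_lt _ Hne)) as [d [Hd Hx]].
  set (e := Rmin d (q - p) / 2).
  assert (He : 0 < e < d /\ e < q - p).
  { assert (0 < Rmin d (q - p)) by (apply Rmin_pos; lra).
    assert (Rmin d (q - p) <= d) by apply Rmin_l.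
    assert (Rmin d (q - p) <= q - p) by apply Rmin_r. unfold e; lra. }
  set (t := if Req_EM_T c p then c + e else c - e).
  assert (Ht : p < t < q /\ t <> c /\ Rabs (t - c) < d).
  { unfold t; destruct (Req_EM_T c p) as [E|E].
    - rewrite Rabs_right by lra. lra.
    - destruct Hend as [|E']; [contradiction|]. rewrite Rabs_left by lra. lra. }
  assert (K := Hx t). simpl in K; unfold R_dist, D_x, no_cond in K.
  rewrite (H0 t ltac:(lra)), Rminus_0_l, Rabs_Ropp in K.
  assert (Rabs (g c) < Rabs (g c)) by (apply K; repeat split; try lra; apply not_eq_sym; lra).
  lra.
Qed.

Lemma hasD_zero_at_endpoint f D p q c : hasD f D -> 0 < c -> p < q ->
  (c = p \/ c = q) -> vanishes_on p q f -> f c = C0.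
Proof.
  intros HD Hc Hpq Hend H0. destruct (HD c Hc) as [Hr Hi].
  apply Ceq; simpl.
  - apply (continuous_zero_at_endpoint (fun s => re (f s)) p q); auto.
    + apply derivable_continuous_pt; exists (re (D c)); exact Hr.
    + intros t Ht; rewrite (H0 t Ht); reflexivity.
  - apply (continuous_zero_at_endpoint (fun s => im (f s)) p q); auto.
    + apply derivable_continuous_pt; exists (im (D c)); exact Hi.
    + intros t Ht; rewrite (H0 t Ht); reflexivity.
Qed.

Lemma RiemannInt_primitive f B a b (pr : Riemann_integrable f a b) : a <= b ->
  (forall x, a <= x <= b -> continuity_pt f x) ->
  (forall x, a <= x <= b -> derivable_pt_lim B x (f x)) -> RiemannInt pr = B b - B a.
Proof.
  intros H Hc HD.
  rewrite (RiemannInt_P20 H (FTC_P1 H Hc) pr).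
  assert (H2 : antiderivative f B a b).
  { split; auto. intros x Hx. exists (exist _ (f x) (HD x Hx)). reflexivity. }
  destruct (antiderivative_Ucte _ _ _ _ _ (RiemannInt_P29 H Hc) H2) as [C HC].
  rewrite (HC b), (HC a); [ring | split; lra | split; lra].
Qed.

Lemma equal_real_integrals (f1 f2 B : R -> R) a b : a <= b ->
  (forall t, a <= t <= b -> continuity_pt f1 t) ->
  (forall t, a <= t <= b -> continuity_pt f2 t) ->
  (forall t, a <= t <= b -> derivable_pt_lim B t (f1 t - f2 t)) ->
  B a = 0 -> B b = 0 -> exists I, RInt_is f1 a b I /\ RInt_is f2 a b I.
Proof.
  intros Hab C1 C2 HD Ba Bb.
  set (pr1 := continuity_implies_RiemannInt Hab C1).
  set (pr2 := continuity_implies_RiemannInt Hab C2).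
  exists (RiemannInt pr1). split; [exists pr1; reflexivity | exists pr2].
  set (pr3 := RiemannInt_P10 (-1) pr1 pr2).
  assert (E1 := RiemannInt_P13 pr1 pr2 pr3).
  assert (E2 : RiemannInt pr3 = B b - B a).
  { apply RiemannInt_primitive; auto.
    - intros x Hx. apply (continuity_pt_plus f1 (mult_real_fct (-1) f2)); auto.
      apply continuity_pt_scal; auto.
    - intros x Hx. unfold mult_real_fct. replace (f1 x + -1 * f2 x) with (f1 x - f2 x) by ring.
      auto. }
  lra.
Qed.

Lemma equal_integrals (f1 f2 B : R -> Cplx) a b : 0 < a -> a <= b ->
  Ck 1 f1 -> Ck 1 f2 -> hasD B (fun t => f1 t - f2 t)%Cplx -> B a = C0 -> B b = C0 ->
  exists I, CInt_is f1 a b I /\ CInt_is f2 a b I.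
Proof.
  intros Ha Hab [D1 [HD1 _]] [D2 [HD2 _]] HB Ba Bb.
  assert (Cont : forall f D t, hasD f D -> a <= t <= b ->
            continuity_pt (fun s => re (f s)) t /\ continuity_pt (fun s => im (f s)) t).
  { intros f D t HD Ht. destruct (HD t ltac:(lra)) as [Hr Hi].
    split; apply derivable_continuous_pt; eexists; eassumption. }
  destruct (equal_real_integrals (fun t => re (f1 t)) (fun t => re (f2 t))
     (fun t => re (B t)) a b Hab) as [Ir [Hr1 Hr2]];
    [intros t Ht; apply (Cont f1 D1 t HD1 Ht) | intros t Ht; apply (Cont f2 D2 t HD2 Ht)
    | intros t Ht; apply (HB t ltac:(lra)) | rewrite Ba; reflexivity | rewrite Bb; reflexivity |].
  destruct (equal_real_integrals (fun t => im (f1 t)) (fun t => im (f2 t))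
     (fun t => im (B t)) a b Hab) as [Ii [Hi1 Hi2]];
    [intros t Ht; apply (Cont f1 D1 t HD1 Ht) | intros t Ht; apply (Cont f2 D2 t HD2 Ht)
    | intros t Ht; apply (HB t ltac:(lra)) | rewrite Ba; reflexivity | rewrite Bb; reflexivity |].
  exists (mkC Ir Ii). split; split; assumption.
Qed.

Lemma Ck_L2_integrand k w f g : Ck k f -> Ck k g -> Ck k (L2_integrand w f g).
Proof.
  intros Hf Hg. unfold L2_integrand.
  apply Ck_mul; [apply Ck_mul; [exact Hf | apply Ck_conj; exact Hg] | apply Ck_rpow].
Qed.

(* Commutation theta x^-2 = x^-2 (theta - 2), for a composition of Euler factors. *)
Lemma chain_shift_inv2 l Q : Ck (length l) Q ->
  agree (chain (map (fun a => a + 2) l) (fun t => RtoC (/ (t * t)) * Q t)%Cplx)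
        (fun t => RtoC (/ (t * t)) * chain l Q t)%Cplx.
Proof.
  induction l as [|a l IH]; intros HQ; simpl; [apply agree_refl|].
  destruct (Ck_chain l 1 Q ltac:(rewrite Nat.add_1_r; exact HQ)) as [H' [HH _]].
  assert (HG := hasD_mul _ _ _ _ hasD_inv2 HH).
  intros t Ht. unfold thp, theta.
  rewrite (agree_deriv _ _ _ (IH (Ck_S_le _ _ HQ)) HG t Ht), (IH (Ck_S_le _ _ HQ) t Ht).
  rewrite (agree_deriv_self _ _ HH t Ht).
  apply Ceq; simpl; field; lra.
Qed.

Section Symmetry.
Variables mu nu : R.

Definition Pi_factors : list R := [0; mu; nu; mu + nu].
Definition Q_factors : list R := [0; mu + nu + 2].
Definition kappa_r : R := (mu + nu + 2) * (mu + nu + 4) / 2.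

Lemma Dop_factored u x : smooth_pos u -> 0 < x ->
  Dop (RtoC mu) (RtoC nu) u x =
    (RtoC (/ (x * x)) * chain Pi_factors u x - RtoC 2 * chain Q_factors u x
     + (x2 x - RtoC kappa_r) * u x)%Cplx.
Proof.
  intros Hsm Hx. destruct (smooth_jets u Hsm) as [F [HJ Hu]].
  unfold Pi_factors, Q_factors, kappa_r. cbv beta iota delta [chain].
  by_expansion x. apply Ceq; simpl; field; lra.
Qed.

Let w := mu + nu + 1.

(* theta (theta + mu + nu + 2) is formally self-adjoint ... *)
Lemma Q_factors_selfadjoint : adjoint_factors w Q_factors = Q_factors.
Proof. unfold adjoint_factors, Q_factors, w; simpl. repeat (apply f_equal2; [ring|]); reflexivity. Qed.

(* ... and the adjoint of Pi(theta) is Pi(theta + 2) = x^2 Pi(theta) x^-2. *)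
Lemma Pi_factors_adjoint : adjoint_factors w Pi_factors = map (fun a => a + 2) Pi_factors.
Proof. unfold adjoint_factors, Pi_factors, w; simpl. repeat (apply f_equal2; [ring|]); reflexivity. Qed.

Lemma Ck_Dop k u : smooth_pos u -> Ck k (Dop (RtoC mu) (RtoC nu) u).
Proof.
  intros Hsm. apply (Ck_ext k (fun x => RtoC (/ (x * x)) * chain Pi_factors u x
     - RtoC 2 * chain Q_factors u x + (x2 x - RtoC kappa_r) * u x)%Cplx).
  - intros x Hx; symmetry; apply Dop_factored; assumption.
  - assert (Hu : forall m, Ck m u) by (intros; apply Ck_smooth; exact Hsm).
    apply Ck_add; [apply Ck_sub | apply Ck_mul; [apply Ck_sub |]];
      try apply Ck_mul; auto using Ck_inv2, Ck_x2, Ck_const, Ck_chain.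
Qed.

Definition pairing_boundary (u v : R -> Cplx) (t : R) : Cplx :=
  (concomitant w Pi_factors u (fun s => RtoC (/ (s * s)) * v s) t
   - RtoC 2 * concomitant w Q_factors u v t)%Cplx.

Lemma pairing_boundary_derivative u v : smooth_pos u -> smooth_pos v ->
  hasD (pairing_boundary u v)
    (fun t => L2_integrand w (Dop (RtoC mu) (RtoC nu) u) v t
              - L2_integrand w u (Dop (RtoC mu) (RtoC nu) v) t)%Cplx.
Proof.
  intros Hu Hv. unfold pairing_boundary. eapply hasD_ext.
  - apply hasD_sub; [| apply hasD_mul; [apply hasD_const|]]; apply green_formula;
      auto using Ck_smooth.
    apply Ck_mul; auto using Ck_inv2, Ck_smooth.
  - intros t Ht. rewrite Pi_factors_adjoint, Q_factors_selfadjoint.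
    unfold L2_integrand.
    rewrite (chain_shift_inv2 Pi_factors v (Ck_smooth _ _ Hv) t Ht).
    rewrite !Dop_factored by assumption.
    apply Ceq; simpl; field; lra.
Qed.

Lemma Dop_symmetric_pairing u v a b : smooth_pos u -> smooth_pos v -> 0 < a -> a <= b ->
  vanishes_on 0 a u -> vanishes_on b (b + 1) u ->
  exists I, CInt_is (L2_integrand w (Dop (RtoC mu) (RtoC nu) u) v) a b I /\
            CInt_is (L2_integrand w u (Dop (RtoC mu) (RtoC nu) v)) a b I.
Proof.
  intros Hu Hv Ha Hab Hu0 Hu1.
  assert (HB := pairing_boundary_derivative u v Hu Hv).
  assert (Vanish : forall p q, vanishes_on p q u -> vanishes_on p q (pairing_boundary u v)).
  { intros p q H t Ht. unfold pairing_boundary.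
    rewrite !(concomitant_vanishes w p q _ u _ H t Ht). apply Ceq; simpl; ring. }
  apply (equal_integrals _ _ (pairing_boundary u v)); auto.
  - apply Ck_L2_integrand; auto using Ck_Dop, Ck_smooth.
  - apply Ck_L2_integrand; auto using Ck_Dop, Ck_smooth.
  - apply (hasD_zero_at_endpoint _ _ 0 a a HB); auto.
  - apply (hasD_zero_at_endpoint _ _ b (b + 1) b HB); auto; lra.
Qed.
End Symmetry.

Theorem proposition2p1 :
  (* (1) symmetry in (mu, nu) *)
  (forall mu nu : Cplx, forall u, smooth_pos u -> forall x, 0 < x ->
       Dop mu nu u x = Dop nu mu u x) /\
  (* (2) regular singularity at 0 with exponents 0, -mu, -nu, -mu-nu *)
  (forall mu nu lam : Cplx,
       reg_sing_at0 (shift_op (Dop mu nu) lam)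
         (C0 :: (- mu)%Cplx :: (- nu)%Cplx :: (- mu - nu)%Cplx :: nil)) /\
  (* (3) symmetry on C_c^oo(R_+) in L^2(R_+, x^{mu+nu+1} dx) *)
  (forall mu nu : R, -1 <= mu -> -1 <= nu ->
     forall u v, Ccinf_pos u -> Ccinf_pos v ->
     forall a b, 0 < a -> a <= b ->
       (forall x, 0 < x -> (x < a \/ b < x) -> u x = C0 /\ v x = C0) ->
       exists I,
         CInt_is (L2_integrand (mu + nu + 1) (Dop (RtoC mu) (RtoC nu) u) v) a b I /\
         CInt_is (L2_integrand (mu + nu + 1) u (Dop (RtoC mu) (RtoC nu) v)) a b I) /\
  (* (5) factorizations for nu = -1 and nu = +1 *)
  (forall mu : Cplx, forall u, smooth_pos u -> forall x, 0 < x ->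
       Dop mu (RtoC (-1)) u x = (Sm1 mu (Sm1 mu u) x - Cm1 mu * u x)%Cplx /\
       Dop mu (RtoC 1) u x = (Sp1 mu (Sp1 mu u) x - Cp1 mu * u x)%Cplx).
Proof.
  split; [|split; [|split]].
  - exact Dop_symmetric.
  - exact Dop_regular_singularity.
  - intros mu nu _ _ u v [Hu _] [Hv _] a b Ha Hab Hsupp.
    apply Dop_symmetric_pairing; auto.
    + intros t Ht. apply Hsupp; lra.
    + intros t Ht. apply Hsupp; lra.
  - intros mu u Hu x Hx. split; [apply Dop_nu_m1 | apply Dop_nu_p1]; assumption.
Qed.
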